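(* Assume the setting and standing assumption below. Then the sequence $\{\|g_{k,1}\|\}_{k\in\mathbb{N}}$ converges to zero $R$-linearly: there exist constants $c_1>0$ and $c_2\in(0,1)$, where $c_2$ depends only on $m$, $\rho$ and the eigenvalues of $A$, such that $$\|g_{k,1}\|\le c_1c_2^k\|g_{1,1}\|\quad\text{for all }k\in\mathbb{N}.$$
   Context: Setting: $A\in\mathbb{R}^{n\times n}$ symmetric positive definite with eigenvalues $0<\lambda_1\le\cdots\le\lambda_n$; $b\in\mathbb{R}^n$, $f(x)=\tfrac12x^TAx-b^Tx$, $g_{k,j}=\nabla f(x_{k,j})=Ax_{k,j}-b$. LMSD method with history length $m\in\mathbb{N}$ and tolerance $0$: given $x_{1,1}$ and positive $\alpha_{1,1},\dots,\alpha_{1,m}$, for cycles $k=1,2,\dots$ and $j=1,\dots,m$ set $x_{k,j+1}=x_{k,j}-\alpha_{k,j}g_{k,j}$; set $x_{k+1,1}=x_{k,m+1}$; let $G_k=[g_{k,1}\ \cdots\ g_{k,m}]$, take a thin QR factorization $G_k=Q_kR_k$ ($Q_k^TQ_k=I_m$, $R_k$ upper triangular), $T_k=Q_k^TAQ_k$ with eigenvalues $\theta_{k,1}\ge\cdots\ge\theta_{k,m}$, and set $\alpha_{k+1,j}=\theta_{k,j}^{-1}$. Standing assumption: $g_{k,j}\ne0$ for all $(k,j)$; for every $k$, $G_k$ has linearly independent columns (so $R_k$ is nonsingular); and there is $\rho\ge1$ with $\|R_k^{-1}\|\le\rho\|g_{k,1}\|^{-1}$ for all $k$ (spectral norm). 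*)

From HB Require Import structures.
From mathcomp Require Import all_boot all_order all_algebra.
Set Implicit Arguments. Unset Strict Implicit. Unset Printing Implicit Defensive.
Import Order.TTheory GRing.Theory Num.Theory.
Local Open Scope ring_scope.

Definition vnorm (R : rcfType) (n : nat) (v : 'cV[R]_n) : R :=
  Num.sqrt (\sum_(i < n) v i 0 ^+ 2).

(* Gradient of f(x) = 1/2 x^T A x - b^T x. *)
Definition grad (R : rcfType) (n : nat) (A : 'M[R]_n) (b x : 'cV[R]_n) : 'cV[R]_n :=
  A *m x - b.

(* G_k = [g_{k,1} ... g_{k,m}]  (0-based: columns j = 0..m-1 of cycle k). *)
Definition Gmat (R : rcfType) (n m : nat) (A : 'M[R]_n) (b : 'cV[R]_n)
  (x : nat -> nat -> 'cV[R]_n) (k : nat) : 'M[R]_(n, m) :=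
  \matrix_(i < n, j < m) grad A b (x k j) i 0.

Definition upper_trig (R : rcfType) (m : nat) (M : 'M[R]_m) : Prop :=
  forall i j : 'I_m, (j < i)%N -> M i j = 0.

From HB Require Import structures.
From mathcomp Require Import all_boot all_order all_algebra.
From mathcomp Require Import ring lra.
Set Implicit Arguments. Unset Strict Implicit. Unset Printing Implicit Defensive.
Import Order.TTheory GRing.Theory Num.Theory.
Local Open Scope ring_scope.

(* Expand the gradients along the eigenspaces of [A].  During a sweep the
   component of [g] on the eigenvalue [mu] is multiplied by the product of the
   factors [1 - mu / theta], where the [theta] are the Ritz values of the
   previous sweep.  These lie in [[lambda_1, lambda_n]], so a component grows by
   at most [(lambda_n / lambda_1) ^+ (2 m)] per sweep.  Moreover the Ritz
   vectors are combinations of the columns of [G_k] with coefficients bounded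
   via [rho], so if the components of [g_{k,1}] on the eigenvalues below [mu]
   are small relative to [g_{k,1}], every Ritz value exceeds [2 mu / 3], and
   the component on [mu] contracts by [1 - lambda_1 / (2 lambda_n)] in the next
   sweep.  Induction on the rank of [mu] among the eigenvalues then shows that
   every component, hence the gradient, decays R-linearly with this rate. *)

Section SymmetricMatrices.
Variable R : realFieldType.

Lemma trmx_mul_self_eq0 (p q : nat) (C : 'M[R]_(p, q)) : C^T *m C = 0 -> C = 0.
Proof.
move=> CtC0; apply/matrixP => i j; rewrite mxE.
have := congr1 (fun M : 'M[R]_q => M j j) CtC0; rewrite !mxE => /eqP.
rewrite psumr_eq0; last by move=> l _; rewrite mxE -expr2 sqr_ge0.
move=> /allP /(_ i (mem_index_enum _)) /=; rewrite mxE mulf_eq0 orbb.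
by move/eqP.
Qed.

Variable n : nat.

Lemma trmx_sym_horner (A : 'M[R]_n.+1) (p : {poly R}) :
  A^T = A -> (horner_mx A p)^T = horner_mx A p.
Proof.
move=> symA; elim/poly_ind: p => [|p c IHp]; first by rewrite rmorph0 trmx0.
rewrite rmorphD rmorphM /= horner_mx_X horner_mx_C raddfD /= tr_scalar_mx.
rewrite -mulmxE trmx_mul IHp symA; congr (_ + _).
by have := comm_horner_mx2 A 'X p; rewrite horner_mx_X /GRing.comm mulmxE.
Qed.

Lemma sym_nilpotent_eq0 (B : 'M[R]_n.+1) (N : nat) :
  B^T = B -> B ^+ N.+1 = 0 -> B = 0.
Proof.
move=> symB BN0.
have trBX k : (B ^+ k)^T = B ^+ k.
  by have := trmx_sym_horner 'X^k symB; rewrite rmorphXn /= horner_mx_X.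
suff pow2 j : B ^+ (2 ^ j) = 0 -> B = 0.
  apply: (pow2 N.+1); have le_N2 : (N.+1 <= 2 ^ N.+1)%N by rewrite ltnW // ltn_expl.
  by rewrite -(subnKC le_N2) exprD BN0 mul0r.
elim: j => [|j IHj] Bj0; first by rewrite expn0 expr1 in Bj0.
apply: IHj; apply: trmx_mul_self_eq0.
by rewrite trBX mulmxE -exprD addnn -mul2n -expnS.
Qed.

(* The [n.+1]-th power of the product is a multiple of the characteristic
   polynomial, hence kills [A] by Cayley-Hamilton; symmetry rules out
   nilpotents. *)
Lemma sym_horner_distinct_eigenvalues (A : 'M[R]_n.+1) (lam : 'I_n.+1 -> R) :
  A^T = A -> char_poly A = \prod_i ('X - (lam i)%:P) ->
  horner_mx A (\prod_(z <- undup [seq lam i | i <- enum 'I_n.+1]) ('X - z%:P)) = 0.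
Proof.
move=> symA charA; set q := \prod_(z <- _) _.
have /dvdpP [w qXE] : char_poly A %| \prod_(i < n.+1) q.
  rewrite charA; apply: (big_ind2 (fun a b => a %| b)) => //.
    by move=> ? ? ? ? ? ?; apply: dvdp_mul.
  move=> i _; rewrite dvdp_XsubCl root_prod_XsubC mem_undup.
  by apply: map_f; rewrite mem_enum.
rewrite prodr_const card_ord in qXE.
apply: (@sym_nilpotent_eq0 _ n); first exact: trmx_sym_horner.
by rewrite -rmorphXn /= qXE rmorphM /= Cayley_Hamilton mulr0.
Qed.

End SymmetricMatrices.

Section LagrangeProjectors.
Variables (R : fieldType) (n r : nat) (A : 'M[R]_n.+1) (mu : 'I_r -> R).
Hypothesis mu_inj : injective mu.

Definition lagrange_poly (s : 'I_r) : {poly R} :=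
  (\prod_(t | t != s) (mu s - mu t))^-1 *: \prod_(t | t != s) ('X - (mu t)%:P).

Lemma lagrange_poly_mu s t : (lagrange_poly s).[mu t] = (s == t)%:R.
Proof.
rewrite hornerZ horner_prod; have [<-|neq_st] := eqVneq s t.
  under [X in _ * X]eq_bigr do rewrite hornerXsubC.
  rewrite mulVf //; apply/prodf_neq0 => u neq_us.
  by rewrite subr_eq0 (inj_eq mu_inj) eq_sym.
by rewrite [X in _ * X](bigD1 t) 1?eq_sym //= hornerXsubC subrr mul0r mulr0.
Qed.

Hypothesis A_root : horner_mx A (\prod_t ('X - (mu t)%:P)) = 0.

Lemma mulmx_horner_lagrange s :
  A *m horner_mx A (lagrange_poly s) = mu s *: horner_mx A (lagrange_poly s).
Proof.
apply/eqP; rewrite -subr_eq0 -mul_scalar_mx -mulmxBl; apply/eqP.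
have -> : A - (mu s)%:M = horner_mx A ('X - (mu s)%:P).
  by rewrite rmorphB /= horner_mx_X horner_mx_C.
rewrite mulmxE -rmorphM /= /lagrange_poly -scalerAr.
have := A_root; rewrite (bigD1 s) //= => A_root_s.
by rewrite linearZ /= A_root_s scaler0.
Qed.

Lemma sum_horner_lagrange : \sum_s horner_mx A (lagrange_poly s) = 1%:M.
Proof.
have roots : all (root (1 - \sum_s lagrange_poly s)) [seq mu t | t <- enum 'I_r].
  apply/allP => _ /mapP [t _ ->]; rewrite /root hornerD hornerN hornerC.
  rewrite horner_sum (bigD1 t) //= lagrange_poly_mu eqxx big1 ?addr0 ?subrr //.
  by move=> u /negbTE neq_ut; rewrite lagrange_poly_mu neq_ut.
have uniq_mu : uniq_roots [seq mu t | t <- enum 'I_r].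
  by rewrite uniq_rootsE map_inj_uniq ?enum_uniq.
have [w wE] := uniq_roots_prod_XsubC roots uniq_mu.
have := congr1 (horner_mx A) wE; rewrite big_map big_enum /= rmorphM /= A_root mulr0.
by rewrite rmorphB /= rmorph1 rmorph_sum => /eqP; rewrite subr_eq0 => /eqP <-.
Qed.

End LagrangeProjectors.

(* The [P s] are the orthogonal projectors onto the eigenspaces of [A] for the
   pairwise distinct values [mu s]. *)
Definition spectral_resolution (R : pzRingType) (n r : nat) (A : 'M[R]_n)
    (mu : 'I_r -> R) (P : 'I_r -> 'M[R]_n) : Prop :=
  [/\ injective mu, forall s, A *m P s = mu s *: P s,
      forall s, (P s)^T = P s & \sum_s P s = 1%:M].

Lemma sym_spectral_resolution (R : realFieldType) (n : nat) (A : 'M[R]_n.+1)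
    (lam : 'I_n.+1 -> R) :
  A^T = A -> char_poly A = \prod_i ('X - (lam i)%:P) ->
  exists r (mu : 'I_r -> R) (P : 'I_r -> 'M[R]_n.+1),
    spectral_resolution A mu P /\ forall s, exists i, mu s = lam i.
Proof.
move=> symA charA; set mus := undup [seq lam i | i <- enum 'I_n.+1].
pose mu (s : 'I_(size mus)) := nth 0 mus s.
have mu_inj : injective mu.
  by move=> s t /eqP; rewrite nth_uniq ?undup_uniq // => /eqP /val_inj.
have A_root : horner_mx A (\prod_t ('X - (mu t)%:P)) = 0.
  by rewrite -(sym_horner_distinct_eigenvalues symA charA) (big_nth 0) big_mkord.
exists (size mus), mu, (fun s => horner_mx A (lagrange_poly mu s)); split.
  split=> // [s|s|]; first exact: mulmx_horner_lagrange.
    exact: trmx_sym_horner.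
  exact: sum_horner_lagrange.
move=> s; have : mu s \in mus by apply: mem_nth.
by rewrite mem_undup => /mapP [i _ ->]; exists i.
Qed.

Definition dotv (R : pzRingType) (n : nat) (u v : 'cV[R]_n) : R := (u^T *m v) 0 0.

Local Notation sqnorm v := (dotv v v).

Section InnerProduct.
Variable R : realDomainType.
Implicit Types (n p q : nat).

Lemma dotvE n (u v : 'cV[R]_n) : dotv u v = \sum_i u i 0 * v i 0.
Proof. by rewrite /dotv mxE; apply: eq_bigr => i _; rewrite mxE. Qed.

Lemma dotvC n (u v : 'cV[R]_n) : dotv u v = dotv v u.
Proof. by rewrite !dotvE; apply: eq_bigr => i _; rewrite mulrC. Qed.

Lemma dotvZl n a (u v : 'cV[R]_n) : dotv (a *: u) v = a * dotv u v.
Proof. by rewrite /dotv linearZ /= -scalemxAl mxE. Qed.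

Lemma dotvZr n a (u v : 'cV[R]_n) : dotv u (a *: v) = a * dotv u v.
Proof. by rewrite /dotv -scalemxAr mxE. Qed.

Lemma sqnormZ n a (v : 'cV[R]_n) : sqnorm (a *: v) = a ^+ 2 * sqnorm v.
Proof. by rewrite dotvZl dotvZr mulrA expr2. Qed.

Lemma dotv_sumr n (I : finType) (u : 'cV[R]_n) (F : I -> 'cV[R]_n) :
  dotv u (\sum_i F i) = \sum_i dotv u (F i).
Proof. by rewrite /dotv mulmx_sumr summxE. Qed.

Lemma dotv_mulmx p q (u : 'cV[R]_p) (M : 'M[R]_(p, q)) (v : 'cV[R]_q) :
  dotv u (M *m v) = dotv (M^T *m u) v.
Proof. by rewrite /dotv trmx_mul trmxK mulmxA. Qed.

Lemma sqnorm_ge0 n (v : 'cV[R]_n) : 0 <= sqnorm v.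
Proof. by rewrite dotvE sumr_ge0 // => i _; rewrite -expr2 sqr_ge0. Qed.

Lemma sqnorm_gt0 n (v : 'cV[R]_n) : v != 0 -> 0 < sqnorm v.
Proof.
move=> v_neq0; rewrite lt_def sqnorm_ge0 andbT; apply: contra v_neq0 => /eqP v0.
have sum_sqr0 : \sum_l v l 0 ^+ 2 = 0.
  by rewrite -[RHS]v0 dotvE; apply: eq_bigr => l _; rewrite expr2.
apply/eqP/matrixP => i j; rewrite !mxE (ord1 j).
have /(_ i isT) := psumr_eq0P (fun l _ => sqr_ge0 (v l 0)) sum_sqr0.
by move/eqP; rewrite sqrf_eq0 => /eqP.
Qed.

End InnerProduct.

Lemma vnormE (R : rcfType) (n : nat) (v : 'cV[R]_n) : vnorm v = Num.sqrt (sqnorm v).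
Proof. by rewrite /vnorm dotvE; congr Num.sqrt; apply: eq_bigr => i _; rewrite expr2. Qed.

Section SpectralResolutionTheory.
Variables (R : realFieldType) (n r : nat) (A : 'M[R]_n).
Variables (mu : 'I_r -> R) (P : 'I_r -> 'M[R]_n).
Hypothesis symA : A^T = A.
Hypothesis specA : spectral_resolution A mu P.

Lemma proj_mulmx s : P s *m A = mu s *: P s.
Proof.
by case: specA => _ AP Psym _; rewrite -Psym -symA -trmx_mul AP linearZ /= Psym.
Qed.

Lemma proj_mulmxA s (v : 'cV[R]_n) : P s *m (A *m v) = mu s *: (P s *m v).
Proof. by rewrite mulmxA proj_mulmx scalemxAl. Qed.

Lemma proj_orth s t : s != t -> P s *m P t = 0.
Proof.
case: specA => mu_inj AP _ _ neq_st.
have : (mu s - mu t) *: (P s *m P t) = 0.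
  by rewrite scalerBl scalemxAl -proj_mulmx scalemxAr -AP mulmxA subrr.
by move/eqP; rewrite scaler_eq0 subr_eq0 (inj_eq mu_inj) (negbTE neq_st) => /eqP.
Qed.

Lemma proj_idem s : P s *m P s = P s.
Proof.
case: specA => _ _ _ Psum.
rewrite -{3}[P s]mulmx1 -Psum mulmx_sumr (bigD1 s) //= big1 ?addr0 // => t neq_ts.
by rewrite proj_orth // eq_sym.
Qed.

Lemma sqnorm_proj s (v : 'cV[R]_n) : sqnorm (P s *m v) = dotv v (P s *m v).
Proof. by case: specA => _ _ Psym _; rewrite dotv_mulmx Psym mulmxA proj_idem dotvC. Qed.

Lemma dotv_sum_proj (M : 'M[R]_n) (v : 'cV[R]_n) :
  dotv v (M *m v) = \sum_s dotv v (M *m (P s *m v)).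
Proof.
by case: specA => _ _ _ Psum; rewrite -dotv_sumr -mulmx_sumr -mulmx_suml Psum mul1mx.
Qed.

Lemma sqnorm_sum_proj (v : 'cV[R]_n) : sqnorm v = \sum_s sqnorm (P s *m v).
Proof.
rewrite -{2}[v]mul1mx dotv_sum_proj; apply: eq_bigr => s _.
by rewrite mul1mx sqnorm_proj.
Qed.

Lemma dotv_mulmx_sum_proj (v : 'cV[R]_n) :
  dotv v (A *m v) = \sum_s mu s * sqnorm (P s *m v).
Proof.
rewrite dotv_sum_proj; apply: eq_bigr => s _.
by case: specA => _ AP _ _; rewrite mulmxA AP -scalemxAl dotvZr sqnorm_proj.
Qed.

Lemma rayleigh_bounds (lo hi : R) (v : 'cV[R]_n) : (forall s, lo <= mu s <= hi) ->
  lo * sqnorm v <= dotv v (A *m v) <= hi * sqnorm v.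
Proof.
move=> mu_bnd; rewrite dotv_mulmx_sum_proj sqnorm_sum_proj !mulr_sumr.
by apply/andP; split; apply: ler_sum => s _;
  rewrite ler_wpM2r ?sqnorm_ge0 //; case/andP: (mu_bnd s).
Qed.

Lemma rayleigh_ge_of_low_mass (z : R) (v : 'cV[R]_n) :
  (forall t, 0 <= mu t) -> 0 <= z ->
  3%:R * \sum_(t | mu t < z) sqnorm (P t *m v) <= sqnorm v ->
  2%:R * z * sqnorm v <= 3%:R * dotv v (A *m v).
Proof.
move=> mu_ge0 z_ge0 low_mass.
set low := \sum_(t | mu t < z) _ in low_mass.
have high : z * (sqnorm v - low) <= dotv v (A *m v).
  rewrite dotv_mulmx_sum_proj sqnorm_sum_proj (bigID (fun t => mu t < z)) /=.
  rewrite [X in _ <= X](bigID (fun t => mu t < z)) /= addrAC subrr add0r.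
  rewrite -[X in X <= _]add0r; apply: lerD.
    by apply: sumr_ge0 => t _; rewrite mulr_ge0 ?sqnorm_ge0.
  by rewrite mulr_sumr; apply: ler_sum => t; rewrite -leNgt => le_zt;
    rewrite ler_wpM2r ?sqnorm_ge0.
have := sqnorm_ge0 v; nra.
Qed.

End SpectralResolutionTheory.

Section RealInequalities.
Variable R : realFieldType.

Lemma sqr_sum_le (m : nat) (y : 'I_m -> R) :
  (\sum_j y j) ^+ 2 <= m%:R * \sum_j y j ^+ 2.
Proof.
have sum_sqr_diff : \sum_i \sum_j (y i - y j) ^+ 2 =
    2%:R * (m%:R * \sum_j y j ^+ 2) - 2%:R * (\sum_j y j) ^+ 2.
  transitivity (\sum_i \sum_j (y i ^+ 2 + y j ^+ 2 - 2%:R * (y i * y j))).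
    by apply: eq_bigr => i _; apply: eq_bigr => j _; ring.
  under eq_bigr do rewrite sumrB big_split /=.
  rewrite sumrB big_split /= sumr_const card_ord exchange_big /= sumr_const card_ord.
  have -> : \sum_i \sum_j 2%:R * (y i * y j) = 2%:R * (\sum_j y j) ^+ 2.
    rewrite expr2 mulr_suml mulr_sumr; apply: eq_bigr => i _.
    by rewrite !mulr_sumr.
  rewrite -[_ *+ m]mulr_natl; ring.
have : 0 <= \sum_i \sum_j (y i - y j) ^+ 2.
  by apply: sumr_ge0 => i _; apply: sumr_ge0 => j _; apply: sqr_ge0.
by rewrite sum_sqr_diff subr_ge0 ler_pM2l ?ltr0n.
Qed.

(* With [y = z / theta], [0 <= y <= hi / lo], so [|1 - y| <= hi / lo]. *)
Lemma sqr_one_sub_ratio_le (lo hi theta z : R) :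
  0 < lo -> lo <= hi -> lo <= theta -> 0 <= z <= hi ->
  (1 - theta^-1 * z) ^+ 2 <= (hi / lo) ^+ 2.
Proof.
move=> lo_gt0 le_lo_hi le_lo_th /andP [z_ge0 le_z_hi].
have th_gt0 : 0 < theta by apply: lt_le_trans le_lo_th.
have y_ge0 : 0 <= theta^-1 * z by rewrite mulr_ge0 // invr_ge0 ltW.
have y_le : theta^-1 * z <= hi / lo.
  rewrite mulrC; apply: ler_pM => //; first by rewrite invr_ge0 ltW.
  by rewrite lef_pV2 ?posrE.
have K_ge1 : 1 <= hi / lo by rewrite ler_pdivlMr // mul1r.
move: y_ge0 y_le K_ge1; set y := theta^-1 * z; set K := hi / lo.
move=> y_ge0 y_le K_ge1.
have : 0 <= (K - 1 + y) * (K + 1 - y) by apply: mulr_ge0; lra.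
nra.
Qed.

(* With [y = z / theta], [lo / hi <= y <= 3 / 2], so
   [|1 - y| <= 1 - lo / (2 hi)]. *)
Lemma sqr_one_sub_ratio_le_contraction (lo hi theta z : R) :
  0 < lo -> lo <= hi -> 0 < theta <= hi -> lo <= z -> 2%:R * z <= 3%:R * theta ->
  (1 - theta^-1 * z) ^+ 2 <= (1 - lo / (2%:R * hi)) ^+ 2.
Proof.
move=> lo_gt0 le_lo_hi /andP [th_gt0 le_th_hi] le_lo_z z_le.
have hi_gt0 : 0 < hi by apply: lt_le_trans le_lo_hi.
have w_gt0 : 0 < lo / hi by rewrite divr_gt0.
have w_le1 : lo / hi <= 1 by rewrite ler_pdivrMr // mul1r.
have -> : lo / (2%:R * hi) = lo / hi / 2%:R by field; rewrite gt_eqF.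
have y_ge : lo / hi <= theta^-1 * z.
  apply: le_trans (_ : z / hi <= _); first by rewrite ler_pM2r ?invr_gt0.
  rewrite [_ * z]mulrC ler_wpM2l ?(le_trans (ltW lo_gt0)) //.
  by rewrite lef_pV2 ?posrE.
have y_le : 2%:R * (theta^-1 * z) <= 3%:R.
  by rewrite mulrCA mulrC ler_pdivrMr.
move: w_gt0 w_le1 y_ge y_le; set w := lo / hi; set y := theta^-1 * z.
move=> w_gt0 w_le1 y_ge y_le.
have : 0 <= (1 - w / 2%:R - (1 - y)) * (1 - w / 2%:R + (1 - y)) by apply: mulr_ge0; lra.
nra.
Qed.

Lemma geometric_of_step_or_small (b : nat -> R) (gam C : R) :
  0 < gam -> 0 <= C -> 0 <= b 1%N ->
  (forall k, (1 <= k)%N -> b k.+1 <= gam * b k \/ b k.+1 <= C * gam ^+ k.+1) ->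
  exists2 E, 0 <= E & forall k, (1 <= k)%N -> b k <= E * gam ^+ k.
Proof.
move=> gam_gt0 C_ge0 b1_ge0 step; pose E := b 1%N / gam + C.
have le_CE : C <= E by rewrite lerDr divr_ge0 // ltW.
exists E; first exact: le_trans le_CE.
elim=> // -[_ _|k IHk _].
  by rewrite expr1 -ler_pdivrMr // lerDl.
case: (step k.+1 isT) => [contr|small]; last first.
  by apply: le_trans small _; rewrite ler_wpM2r // exprn_ge0 // ltW.
by apply: le_trans contr _; rewrite exprS mulrCA ler_wpM2l ?IHk // ltW.
Qed.

(* At an index where [L] is large, [a] is small since [eps * a <= eps * h < L],
   and two steps of growth by [K] keep it small. *)
Lemma geometric_of_conditional_contraction (a L h : nat -> R) (K eps D gam : R) :
  0 <= K -> 0 < eps -> 0 < gam -> 0 <= D ->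
  (forall k, (1 <= k)%N -> 0 <= a k <= h k) ->
  (forall k, (1 <= k)%N -> a k.+1 <= K * a k) ->
  (forall k, (1 <= k)%N -> L k <= eps * h k -> a k.+2 <= gam * a k.+1) ->
  (forall k, (1 <= k)%N -> L k <= D * gam ^+ k) ->
  exists2 E, 0 <= E & forall k, (1 <= k)%N -> a k <= E * gam ^+ k.
Proof.
move=> K_ge0 eps_gt0 gam_gt0 D_ge0 a_bnd a_grow a_contr L_bnd.
have gam2_gt0 : 0 < gam ^+ 2 by rewrite exprn_gt0.
have a1_ge0 : 0 <= a 1%N by case/andP: (a_bnd 1%N isT).
have KD_ge0 : 0 <= K ^+ 2 * D / eps by rewrite !mulr_ge0 ?exprn_ge0 // invr_ge0 ltW.
pose C := (K * a 1%N + K ^+ 2 * D / eps) / gam ^+ 2.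
have C_ge0 : 0 <= C by rewrite divr_ge0 ?addr_ge0 ?(mulr_ge0 K_ge0 a1_ge0) // ltW.
apply: (geometric_of_step_or_small gam_gt0 C_ge0 a1_ge0) => -[//|[_|j _]].
  right; rewrite /C divfK ?gt_eqF //; apply: le_trans (a_grow 1%N isT) _.
  by rewrite lerDl.
have [small|large] := boolP (L j.+1 <= eps * h j.+1); first by left; exact: a_contr.
right; rewrite -ltNge in large; have /andP [_ ajh] := a_bnd j.+1 isT.
have aj_le : a j.+1 <= D / eps * gam ^+ j.+1.
  rewrite mulrAC ler_pdivlMr // mulrC; apply: le_trans (L_bnd j.+1 isT).
  by apply: ltW; apply: le_lt_trans large; rewrite ler_wpM2l // ltW.
have a_two : a j.+3 <= K ^+ 2 * a j.+1.
  by apply: le_trans (a_grow j.+2 isT) _; rewrite expr2 -mulrA ler_wpM2l ?a_grow.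
have -> : C * gam ^+ j.+3 = (K * a 1%N + K ^+ 2 * D / eps) * gam ^+ j.+1.
  by rewrite -addn2 exprD mulrCA /C divfK ?gt_eqF // mulrC.
have := exprn_gt0 j.+1 gam_gt0; have := exprn_ge0 2 K_ge0.
move: aj_le a_two (mulr_ge0 K_ge0 a1_ge0); set g := gam ^+ j.+1; set De := D / eps.
rewrite -!mulrA => aj_le a_two Ka1_ge0 K2_ge0 g_gt0; nra.
Qed.

Lemma one_sub_half_ratio_gt0_lt1 (lo hi : R) :
  0 < lo -> lo <= hi -> 0 < 1 - lo / (2%:R * hi) < 1.
Proof.
move=> lo_gt0 le_lo_hi; have hi_gt0 : 0 < hi by apply: lt_le_trans le_lo_hi.
have -> : lo / (2%:R * hi) = lo / hi / 2%:R by field; rewrite gt_eqF.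
have w_gt0 : 0 < lo / hi by rewrite divr_gt0.
have w_le1 : lo / hi <= 1 by rewrite ler_pdivrMr // mul1r.
move: w_gt0 w_le1; set w := lo / hi => w_gt0 w_le1.
by apply/andP; split; lra.
Qed.

End RealInequalities.

Lemma sqrtr_le_div_mul (R : rcfType) (a d e c : R) :
  0 <= a -> 0 < d -> 0 <= e -> 0 <= c ->
  Num.sqrt a <= c / Num.sqrt d * Num.sqrt e -> a * d <= c ^+ 2 * e.
Proof.
move=> a_ge0 d_gt0 e_ge0 c_ge0.
have sd_gt0 : 0 < Num.sqrt d by rewrite sqrtr_gt0.
rewrite mulrAC ler_pdivlMr // => le_sqrt.
have : (Num.sqrt a * Num.sqrt d) ^+ 2 <= (c * Num.sqrt e) ^+ 2.
  by rewrite lerXn2r // ?nnegrE // mulr_ge0 ?sqrtr_ge0 // ltW.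
by rewrite !exprMn !sqr_sqrtr // ltW.
Qed.

Section LMSD.
Variables (R : rcfType) (n m : nat) (rho lo hi : R).
Variables (A : 'M[R]_n) (b : 'cV[R]_n) (x : nat -> nat -> 'cV[R]_n).
Variables (alpha : nat -> nat -> R) (Q : nat -> 'M[R]_(n, m)) (Rf : nat -> 'M[R]_m).
Variables (theta : nat -> nat -> R) (r : nat) (mu : 'I_r -> R) (P : 'I_r -> 'M[R]_n).
Hypothesis m_gt0 : (0 < m)%N.
Hypothesis rho_ge1 : 1 <= rho.
Hypothesis lo_gt0 : 0 < lo.
Hypothesis le_lo_hi : lo <= hi.
Hypothesis symA : A^T = A.
Hypothesis specA : spectral_resolution A mu P.
Hypothesis mu_bnd : forall s, lo <= mu s <= hi.
Hypothesis x_step :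
  forall k j, (j < m)%N -> x k j.+1 = x k j - alpha k j *: grad A b (x k j).
Hypothesis x_restart : forall k, x k.+1 0%N = x k m.
Hypothesis G_QR : forall k, Gmat m A b x k = Q k *m Rf k.
Hypothesis Q_orth : forall k, (Q k)^T *m Q k = 1%:M.
Hypothesis theta_char :
  forall k, char_poly ((Q k)^T *m A *m Q k) = \prod_(j < m) ('X - (theta k j)%:P).
Hypothesis alpha_next : forall k j, (j < m)%N -> alpha k.+1 j = (theta k j)^-1.
Hypothesis grad_neq0 : forall k j, (j < m)%N -> grad A b (x k j) != 0.
Hypothesis G_free : forall k, row_free (Gmat m A b x k)^T.
Hypothesis Rinv_bound : forall k (v : 'cV[R]_m),
  vnorm (invmx (Rf k) *m v) <= rho / vnorm (grad A b (x k 0%N)) * vnorm v.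

Local Notation g k j := (grad A b (x k j)).
Local Notation h k := (grad A b (x k 0%N)).
Local Notation G k := (Gmat m A b x k).
Local Notation comp s k := (sqnorm (P s *m h k)).
Local Notation Kc := (((hi / lo) ^+ 2) ^+ m).
Local Notation eps := ((3%:R * m%:R * Kc * rho ^+ 2)^-1).
Local Notation del := (1 - lo / (2%:R * hi)).

Lemma grad_step k j : (j < m)%N -> g k j.+1 = g k j - alpha k j *: (A *m g k j).
Proof. by move=> jm; rewrite {1}/grad x_step // mulmxBr -scalemxAr addrAC. Qed.

Lemma proj_grad s k j : (j <= m)%N ->
  P s *m g k j = (\prod_(l < j) (1 - alpha k l * mu s)) *: (P s *m h k).
Proof.
elim: j => [|j IHj] jm; first by rewrite big_ord0 scale1r.
rewrite grad_step // mulmxBr -scalemxAr (proj_mulmxA symA specA) IHj ?(ltnW jm) //.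
by rewrite !scalerA -scalerBl big_ord_recr /=; congr (_ *: _); ring.
Qed.

Lemma proj_grad_restart s k :
  P s *m h k.+1 = (\prod_(l < m) (1 - alpha k l * mu s)) *: (P s *m h k).
Proof. by rewrite x_restart proj_grad. Qed.

Lemma Rf_unit k : Rf k \in unitmx.
Proof.
rewrite -row_free_unit /row_free eqn_leq rank_leq_row /=.
have := G_free k; rewrite /row_free G_QR trmx_mul => /eqP rankRQ.
apply: leq_trans (_ : (\rank ((Rf k)^T *m (Q k)^T) <= _)%N); first by rewrite rankRQ.
by apply: leq_trans (mxrankM_maxl _ _) _; rewrite mxrank_tr.
Qed.

Lemma Gmat_mulmx k (c : 'cV[R]_m) : G k *m c = \sum_(j < m) c j 0 *: g k j.
Proof.
apply/matrixP => i z; rewrite (ord1 z) !mxE summxE; apply: eq_bigr => j _.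
by rewrite !mxE mulrC.
Qed.

(* A Ritz value [theta k j] is the Rayleigh quotient of [G_k c], where [c] is
   [R_k^-1] applied to an eigenvector of [T_k]; the hypothesis on [R_k^-1]
   bounds [c] by [G_k c]. *)
Lemma ritz_vector k j : (j < m)%N -> exists c : 'cV[R]_m,
  [/\ G k *m c != 0,
      theta k j * sqnorm (G k *m c) = dotv (G k *m c) (A *m (G k *m c)) &
      sqnorm c * sqnorm (h k) <= rho ^+ 2 * sqnorm (G k *m c)].
Proof.
move=> jm; set T := (Q k)^T *m A *m Q k.
have /eigenvalueP [w Tw w_neq0] : eigenvalue T (theta k j).
  rewrite eigenvalue_root_char /T theta_char /root horner_prod (bigD1 (Ordinal jm)) //=.
  by rewrite hornerXsubC subrr mul0r.
have symT : T^T = T by rewrite /T !trmx_mul trmxK symA mulmxA.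
have Tw' : T *m w^T = theta k j *: w^T by rewrite -symT -trmx_mul Tw linearZ.
exists (invmx (Rf k) *m w^T).
have Gc : G k *m (invmx (Rf k) *m w^T) = Q k *m w^T.
  by rewrite G_QR -mulmxA (mulmxA (Rf k)) mulmxV ?Rf_unit // mul1mx.
have sqnormGc : sqnorm (Q k *m w^T) = sqnorm w^T.
  by rewrite dotv_mulmx mulmxA Q_orth mul1mx.
have Gc_gt0 : 0 < sqnorm (Q k *m w^T) by rewrite sqnormGc sqnorm_gt0 ?trmx_eq0.
rewrite Gc; split.
- by apply: contraTneq Gc_gt0 => ->; rewrite /dotv mulmx0 mxE ltxx.
- rewrite sqnormGc (dotvC (Q k *m w^T)) dotv_mulmx.
  have -> : (Q k)^T *m (A *m (Q k *m w^T)) = T *m w^T by rewrite /T !mulmxA.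
  by rewrite Tw' dotvZl.
- have := Rinv_bound k w^T; rewrite !vnormE -sqnormGc -Gc => le_c.
  apply: sqrtr_le_div_mul => //; rewrite ?sqnorm_ge0 ?sqnorm_gt0 ?grad_neq0 //.
  exact: le_trans rho_ge1.
Qed.

Lemma ritz_value_bounds k j : (j < m)%N -> lo <= theta k j <= hi.
Proof.
move=> jm; have [c [Gc_neq0 rayleigh _]] := ritz_vector k jm.
have Gc_gt0 := sqnorm_gt0 Gc_neq0.
have /andP [lo_le le_hi] := rayleigh_bounds symA specA (G k *m c) mu_bnd.
by rewrite -(ler_pM2r Gc_gt0) -[theta k j <= hi](ler_pM2r Gc_gt0) rayleigh lo_le.
Qed.

Lemma step_prod_sqr_le k j (z : R) : (1 <= k)%N -> (j <= m)%N -> lo <= z <= hi ->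
  (\prod_(l < j) (1 - alpha k l * z)) ^+ 2 <= Kc.
Proof.
case: k => // k _ jm /andP [le_lo_z le_z_hi]; rewrite -prodrXl.
apply: le_trans (_ : \prod_(l < j) (hi / lo) ^+ 2 <= _).
  apply: ler_prod => l _; rewrite sqr_ge0 alpha_next ?(leq_trans (ltn_ord l)) //=.
  have /andP [lo_le _] := ritz_value_bounds k (leq_trans (ltn_ord l) jm).
  by apply: sqr_one_sub_ratio_le; rewrite // (le_trans (ltW lo_gt0)).
rewrite prodr_const card_ord; apply: ler_weXn2l => //.
by apply: exprn_ege1; rewrite ler_pdivlMr // mul1r.
Qed.

Lemma comp_growth s k : (1 <= k)%N -> comp s k.+1 <= Kc * comp s k.
Proof.
move=> k_ge1; rewrite proj_grad_restart sqnormZ ler_wpM2r ?sqnorm_ge0 //.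
exact: step_prod_sqr_le.
Qed.

(* Each column of [G_k] is a polynomial in [A] applied to [h k]. *)
Lemma proj_Gmat_sqnorm_le s k (c : 'cV[R]_m) : (1 <= k)%N ->
  sqnorm (P s *m (G k *m c)) <= m%:R * Kc * sqnorm c * comp s k.
Proof.
move=> k_ge1; rewrite Gmat_mulmx mulmx_sumr.
have -> : \sum_(j < m) P s *m (c j 0 *: g k j) =
   (\sum_(j < m) c j 0 * \prod_(l < j) (1 - alpha k l * mu s)) *: (P s *m h k).
  rewrite scaler_suml; apply: eq_bigr => j _.
  by rewrite -scalemxAr (proj_grad s k (ltnW (ltn_ord j))) scalerA.
rewrite sqnormZ ler_wpM2r ?sqnorm_ge0 //; apply: le_trans (sqr_sum_le _) _.
rewrite -mulrA ler_wpM2l ?ler0n // dotvE mulr_sumr; apply: ler_sum => j _.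
rewrite exprMn mulrC -expr2 ler_wpM2r ?sqr_ge0 //.
by apply: step_prod_sqr_le; rewrite // ltnW.
Qed.

Lemma Kc_ge1 : 1 <= Kc.
Proof. by do 2!apply: exprn_ege1; rewrite ler_pdivlMr // mul1r. Qed.

Lemma eps_gt0 : 0 < eps.
Proof.
have rho_gt0 : 0 < rho := lt_le_trans ltr01 rho_ge1.
have Kc_gt0 : 0 < Kc := lt_le_trans ltr01 Kc_ge1.
by rewrite invr_gt0 !mulr_gt0 ?ltr0n // exprn_gt0.
Qed.

(* When the components of [h k] on the eigenvalues below [mu s] are small, every
   Ritz vector of cycle [k] has at most a third of its mass there. *)
Lemma ritz_value_ge s k j : (1 <= k)%N -> (j < m)%N ->
  \sum_(t | mu t < mu s) comp t k <= eps * sqnorm (h k) ->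
  2%:R * mu s <= 3%:R * theta k j.
Proof.
move=> k_ge1 jm low_small; have [c [Gc_neq0 rayleigh c_le]] := ritz_vector k jm.
have Gc_gt0 := sqnorm_gt0 Gc_neq0.
have mu_ge0 t : 0 <= mu t by case/andP: (mu_bnd t) => + _; apply: le_trans; apply: ltW.
rewrite -(ler_pM2r Gc_gt0) -[X in _ <= X]mulrA rayleigh.
apply: (rayleigh_ge_of_low_mass symA specA) => //.
have mKc_ge0 : 0 <= m%:R * Kc * sqnorm c.
  by rewrite !mulr_ge0 ?ler0n ?sqnorm_ge0 // (le_trans ler01 Kc_ge1).
apply: le_trans (_ : _ <= 3%:R * (m%:R * Kc * sqnorm c * (eps * sqnorm (h k)))) _.
  rewrite ler_wpM2l ?ler0n //; apply: le_trans (ler_wpM2l mKc_ge0 low_small).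
  by rewrite mulr_sumr; apply: ler_sum => t _; apply: proj_Gmat_sqnorm_le.
have eps_inv : 3%:R * m%:R * Kc * rho ^+ 2 * eps = 1.
  by rewrite mulfV // gt_eqF // -invr_gt0 eps_gt0.
have -> : 3%:R * (m%:R * Kc * sqnorm c * (eps * sqnorm (h k))) =
    3%:R * m%:R * Kc * eps * (sqnorm c * sqnorm (h k)) by ring.
apply: le_trans (_ : _ <= 3%:R * m%:R * Kc * eps * (rho ^+ 2 * sqnorm (G k *m c))) _.
  rewrite ler_wpM2l // !mulr_ge0 ?ler0n ?(le_trans ler01 Kc_ge1) //.
  exact: ltW eps_gt0.
by rewrite mulrA -[X in X * _ <= _]mulrAC eps_inv mul1r.
Qed.

Lemma comp_contraction s k : (1 <= k)%N ->
  \sum_(t | mu t < mu s) comp t k <= eps * sqnorm (h k) ->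
  comp s k.+2 <= del ^+ 2 * comp s k.+1.
Proof.
move=> k_ge1 low_small.
have /andP [del_gt0 del_lt1] := one_sub_half_ratio_gt0_lt1 lo_gt0 le_lo_hi.
have del_ge0 := ltW del_gt0.
rewrite proj_grad_restart sqnormZ ler_wpM2r ?sqnorm_ge0 // -prodrXl.
apply: le_trans (_ : \prod_(l < m) del ^+ 2 <= _); last first.
  rewrite prodr_const card_ord; apply: ler_iXnr => //; first exact: sqr_ge0.
  by rewrite expr_le1 // ltW.
apply: ler_prod => l _; rewrite sqr_ge0 /= alpha_next //.
have /andP [lo_le le_hi] := ritz_value_bounds k (ltn_ord l).
case/andP: (mu_bnd s) => le_lo_mu _.
apply: sqr_one_sub_ratio_le_contraction => //; last exact: ritz_value_ge low_small.
by rewrite le_hi (lt_le_trans lo_gt0).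
Qed.

Lemma card_lt_mu s t : mu t < mu s ->
  (#|[pred u | (mu u < mu t)%R]| < #|[pred u | (mu u < mu s)%R]|)%N.
Proof.
move=> lt_ts; apply: proper_card; apply/properP; split.
  by apply/subsetP => u; rewrite !inE => /lt_trans; apply.
by exists t; rewrite !inE ?ltxx.
Qed.

(* Induction on the number of eigenvalues below [mu s]. *)
Lemma comp_geometric s :
  exists2 E, 0 <= E & forall k, (1 <= k)%N -> comp s k <= E * (del ^+ 2) ^+ k.
Proof.
have /andP [del_gt0 _] := one_sub_half_ratio_gt0_lt1 lo_gt0 le_lo_hi.
have gam_gt0 : 0 < del ^+ 2 by rewrite exprn_gt0.
have [N] := ubnP #|[pred u | mu u < mu s]|; elim: N s => // N IHN s.
rewrite ltnS => rank_s.
have lower t : exists2 E, 0 <= E &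
    mu t < mu s -> forall k, (1 <= k)%N -> comp t k <= E * (del ^+ 2) ^+ k.
  have [lt_ts|_] := ltP (mu t) (mu s); last by exists 0.
  by have [E E_ge0 E_bnd] := IHN t (leq_trans (card_lt_mu lt_ts) rank_s); exists E.
have [E E_ge0 E_bnd] := fin_all_exists2 lower.
have low_bnd k : (1 <= k)%N ->
    \sum_(t | mu t < mu s) comp t k <= (\sum_t E t) * (del ^+ 2) ^+ k.
  move=> k_ge1; rewrite mulr_suml [X in _ <= X](bigID (fun t => mu t < mu s)) /=.
  rewrite -[X in X <= _]addr0; apply: lerD; first by apply: ler_sum => t lt_ts; exact: E_bnd.
  by apply: sumr_ge0 => t _; apply: mulr_ge0; [exact: E_ge0 | exact/exprn_ge0/ltW].
apply: (geometric_of_conditional_contraction (K := Kc) (eps := eps)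
  (h := fun k => sqnorm (h k)) (le_trans ler01 Kc_ge1) eps_gt0 gam_gt0 _ _ _ _ low_bnd).
- by apply: sumr_ge0 => t _.
- move=> k _; rewrite sqnorm_ge0 /= (sqnorm_sum_proj symA specA (h k)) (bigD1 s) //=.
  by rewrite lerDl sumr_ge0 // => t _; apply: sqnorm_ge0.
- by move=> k; apply: comp_growth.
- by move=> k; apply: comp_contraction.
Qed.

Lemma grad_sqnorm_geometric :
  exists2 F, 0 <= F & forall k, (1 <= k)%N -> sqnorm (h k) <= F * (del ^+ 2) ^+ k.
Proof.
have [E E_ge0 E_bnd] := fin_all_exists2 comp_geometric.
exists (\sum_s E s); first exact: sumr_ge0.
move=> k k_ge1; rewrite (sqnorm_sum_proj symA specA) mulr_suml.
by apply: ler_sum => s _; apply: E_bnd.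
Qed.

Lemma grad_norm_geometric : exists c1 : R, 0 < c1 /\
  forall k, vnorm (h k) <= c1 * del ^+ k.+1 * vnorm (h 0%N).
Proof.
have [F F_ge0 F_bnd] := grad_sqnorm_geometric.
have /andP [del_gt0 _] := one_sub_half_ratio_gt0_lt1 lo_gt0 le_lo_hi.
set H0 := vnorm (h 0%N).
have H0_gt0 : 0 < H0 by rewrite /H0 vnormE sqrtr_gt0 sqnorm_gt0 ?grad_neq0.
exists ((Num.sqrt F + H0) / (del * H0)).
split; first by rewrite divr_gt0 ?mulr_gt0 ?(ltr_wpDl (sqrtr_ge0 F)).
move=> k; have -> : (Num.sqrt F + H0) / (del * H0) * del ^+ k.+1 * H0 =
    (Num.sqrt F + H0) * del ^+ k.
  move: del_gt0 H0_gt0; move: del H0 (Num.sqrt F + H0) => d H S d_gt0 H_gt0.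
  by rewrite exprS; field; rewrite !gt_eqF.
case: k => [|k]; first by rewrite expr0 mulr1 lerDr sqrtr_ge0.
rewrite vnormE; apply: le_trans (ler_wsqrtr (F_bnd k.+1 isT)) _.
rewrite -exprM mulnC exprM sqrtrM // sqrtr_sqr ger0_norm; last exact/exprn_ge0/ltW.
by rewrite ler_pM2r ?exprn_gt0 // lerDl ltW.
Qed.

End LMSD.

(* 0-based indexing: cycle k (paper) = k.+1 here, inner index j (paper) = j.+1 here;
   x k j for j <= m, with x k m = x_{k,m+1}. *)
Theorem mainTheorem8 (R : rcfType) (n m : nat) (rho : R) (lam : 'I_n -> R) :
  (0 < m)%N -> 1 <= rho ->
  (forall i, 0 < lam i) ->
  (forall i j : 'I_n, (i <= j)%N -> lam i <= lam j) ->
  exists c2 : R, 0 < c2 < 1 /\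
  forall (A : 'M[R]_n) (b : 'cV[R]_n) (x : nat -> nat -> 'cV[R]_n)
         (alpha : nat -> nat -> R) (Q : nat -> 'M[R]_(n, m)) (Rf : nat -> 'M[R]_m)
         (theta : nat -> nat -> R),
    (* A symmetric positive definite with eigenvalues lam (with multiplicity) *)
    A^T = A ->
    (forall v : 'cV[R]_n, v != 0 -> 0 < (v^T *m A *m v) 0 0) ->
    char_poly A = \prod_(i < n) ('X - (lam i)%:P) ->
    (* positive initial step sizes *)
    (forall j, (j < m)%N -> 0 < alpha 0%N j) ->
    (* LMSD iteration *)
    (forall k j, (j < m)%N -> x k j.+1 = x k j - alpha k j *: grad A b (x k j)) ->
    (forall k, x k.+1 0%N = x k m) ->
    (* thin QR factorization of G_k *)
    (forall k, Gmat m A b x k = Q k *m Rf k) ->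
    (forall k, (Q k)^T *m Q k = 1%:M) ->
    (forall k, upper_trig (Rf k)) ->
    (* eigenvalues of T_k = Q_k^T A Q_k, in nonincreasing order, and new step sizes *)
    (forall k, char_poly ((Q k)^T *m A *m Q k) = \prod_(j < m) ('X - (theta k j)%:P)) ->
    (forall k i j, (i <= j)%N -> (j < m)%N -> theta k j <= theta k i) ->
    (forall k j, (j < m)%N -> alpha k.+1 j = (theta k j)^-1) ->
    (* standing assumption *)
    (forall k j, (j < m)%N -> grad A b (x k j) != 0) ->
    (forall k, row_free (Gmat m A b x k)^T) ->
    (forall k (v : 'cV[R]_m),
        vnorm (invmx (Rf k) *m v) <= rho / vnorm (grad A b (x k 0%N)) * vnorm v) ->
    exists c1 : R, 0 < c1 /\
      forall k : nat,
        vnorm (grad A b (x k 0%N)) <= c1 * c2 ^+ k.+1 * vnorm (grad A b (x 0%N 0%N)).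
Proof.
move=> m_gt0 rho_ge1; case: n lam => [|n] lam lam_gt0 lam_mono.
  exists 2%:R^-1; split; first by rewrite invr_gt0 ltr0n invf_lt1 ?ltr0n ?ltr1n.
  move=> A b x alpha Q Rf theta _ _ _ _ _ _ _ _ _ _ _ _ grad_neq0.
  by have := grad_neq0 0%N 0%N m_gt0; rewrite [grad _ _ _]flatmx0 eqxx.
have lo_gt0 := lam_gt0 ord0.
have le_lo_hi : lam ord0 <= lam ord_max by apply: lam_mono.
exists (1 - lam ord0 / (2%:R * lam ord_max)).
split; first exact: one_sub_half_ratio_gt0_lt1.
(* Positive definiteness, positivity of the initial step sizes, the ordering of
   the Ritz values and the triangularity of [R_k] are not needed. *)
move=> A b x alpha Q Rf theta symA _ charA _ x_step x_restart G_QR Q_orth _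
  theta_char _ alpha_next grad_neq0 G_free Rinv_bound.
have [r [mu [P [specA mu_lam]]]] := sym_spectral_resolution symA charA.
have mu_bnd s : lam ord0 <= mu s <= lam ord_max.
  by have [i ->] := mu_lam s; rewrite !lam_mono // -ltnS ltn_ord.
exact: (grad_norm_geometric m_gt0 rho_ge1 lo_gt0 le_lo_hi symA specA mu_bnd
  x_step x_restart G_QR Q_orth theta_char alpha_next grad_neq0 G_free Rinv_bound).
Qed.
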